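(* Let $X=(x_1,\dots,x_k)$ be a composition of a positive integer $n$, and let $\ell\ge2$. The set of Dyck words of semilength $n$ with free composition $X$ and exactly $\ell$ hits is in bijection with the set of Motzkin paths of length $k-1$ having exactly $\ell-2$ flat steps at height zero.
   Context: A Dyck word of semilength $n$ is a word with $n$ zeros and $n$ ones in which every prefix has at least as many zeros as ones; it has a hit at position $2j$ ($0\le j\le n$) if its prefix of length $2j$ has exactly $j$ zeros and $j$ ones (positions $0$ and $2n$ included). Indices $i,i+1$ are linked if the $i$-th and $(i+1)$-st $0$ occupy adjacent positions and the $i$-th and $(i+1)$-st $1$ occupy adjacent positions; free blocks are maximal intervals of $\{1,\dots,n\}$ of linked consecutive indices, and the free composition lists their sizes from left to right. A Motzkin path of length $k$ is a lattice path from $(0,0)$ to $(k,0)$ with steps $(1,1)$, $(1,-1)$, $(1,0)$ (flat steps) never going below the $x$-axis; a flat step is at height zero if it lies on the $x$-axis. *)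

From mathcomp Require Import all_boot.
Set Implicit Arguments. Unset Strict Implicit. Unset Printing Implicit Defensive.

(* Words over {0,1}: the letter 0 is [false], the letter 1 is [true]. *)

Definition is_composition (n : nat) (X : seq nat) : bool :=
  all (fun x => 0 < x) X && (sumn X == n).

Definition is_dyck (n : nat) (w : seq bool) : bool :=
  [&& size w == n.*2, count (pred1 false) w == n, count (pred1 true) w == n &
      all (fun i => count (pred1 true) (take i w) <= count (pred1 false) (take i w))
          (iota 0 (size w).+1)].

Definition hits (n : nat) (w : seq bool) : nat :=
  count (fun j => (count (pred1 false) (take j.*2 w) == j) &&
                  (count (pred1 true) (take j.*2 w) == j)) (iota 0 n.+1).

Definition letter_pos (b : bool) (w : seq bool) : seq nat :=
  [seq j <- iota 0 (size w) | nth false w j == b].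

(* The i-th (1-based) occurrence of letter b in w. *)
Definition occ (b : bool) (w : seq bool) (i : nat) : nat :=
  nth 0 (letter_pos b w) i.-1.

Definition linked (w : seq bool) (i : nat) : bool :=
  (occ false w i.+1 == (occ false w i).+1) && (occ true w i.+1 == (occ true w i).+1).

(* Sizes of maximal blocks, given the link booleans between consecutive
   indices (cur = size of the current block). *)
Fixpoint blocks (l : seq bool) (cur : nat) : seq nat :=
  match l with
  | [::] => [:: cur]
  | b :: l' => if b then blocks l' cur.+1 else cur :: blocks l' 1
  end.

Definition free_composition (n : nat) (w : seq bool) : seq nat :=
  if n is 0 then [::]
  else blocks [seq linked w i | i <- iota 1 n.-1] 1.

(* Motzkin steps: Some true = up (1,1), Some false = down (1,-1), None = flat. *)
Fixpoint motzkin_from (h : nat) (s : seq (option bool)) : bool :=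
  match s with
  | [::] => h == 0
  | Some true :: s' => motzkin_from h.+1 s'
  | Some false :: s' => (0 < h) && motzkin_from h.-1 s'
  | None :: s' => motzkin_from h s'
  end.

Definition is_motzkin (s : seq (option bool)) : bool := motzkin_from 0 s.

Fixpoint flat0_from (h : nat) (s : seq (option bool)) : nat :=
  match s with
  | [::] => 0
  | Some true :: s' => flat0_from h.+1 s'
  | Some false :: s' => flat0_from h.-1 s'
  | None :: s' => (h == 0) + flat0_from h s'
  end.

Definition flat_zero (s : seq (option bool)) : nat := flat0_from 0 s.

(** For b = 0, 1 record, for each occurrence of the letter b in a word w, whether
   the next letter is again b.  These two bit sequences u, v of length n determine
   w, and their last bits are 0.  The other pairs (u_i, v_i), i < n - 1, form a word
   over four letters: (1, 1) says that i + 1 and i + 2 are linked, while (1, 0),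
   (0, 1) and (0, 0) are read as up, down and flat steps.  Since u_i = 0 closes a run
   of zeros and v_i = 0 a run of ones, and w starts with a zero, the i-th zero
   precedes the i-th one iff no more runs of zeros than of ones are closed before
   them; hence w is a Dyck word iff these steps form a Motzkin path, and the prefix
   of length 2(i + 1), 0 < i + 1 < n, is a hit iff (u_i, v_i) is a flat step at
   height zero.  The free composition of w records where the linked pairs sit, so
   once it is fixed, erasing them is a bijection onto Motzkin paths of length k - 1. *)

From mathcomp Require Import all_boot zify.
Set Implicit Arguments. Unset Strict Implicit. Unset Printing Implicit Defensive.

Local Notation pos b w i := (nth 0 (letter_pos b w) i).

(* Simplification identifies the two elaborations [count (Equality.sort _)] and
   [count bool] of letter counts, which [lia] would treat as distinct atoms. *)
Ltac slia := simpl in *; lia.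

Lemma count_take_le (T : Type) (a : pred T) t (s : seq T) :
  count a (take t s) <= count a s.
Proof. by rewrite -{2}(cat_take_drop t s) count_cat leq_addr. Qed.

Lemma count_false_true (s : seq bool) : count_mem false s + count_mem true s = size s.
Proof. by rewrite -(count_predC (pred1 false)); congr (_ + _); apply: eq_count => -[]. Qed.

Lemma count_take_nth (T : Type) (x0 : T) (a : pred T) s j : j < size s ->
  count a (take j.+1 s) = count a (take j s) + a (nth x0 s j).
Proof. by move=> Hj; rewrite (take_nth x0 Hj) -cats1 count_cat /= addn0. Qed.

Lemma last_false_nil (s : seq bool) :
  last false s = false -> count_mem false s = 0 -> s = [::].
Proof.
by case/lastP: s => // s x; rewrite last_rcons => ->; rewrite -cats1 count_cat addn1.
Qed.

Lemma letter_pos_cons (b c : bool) (w : seq bool) :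
  letter_pos b (c :: w) =
  if c == b then 0 :: map S (letter_pos b w) else map S (letter_pos b w).
Proof.
by rewrite /letter_pos /= (iotaDl 1 0) filter_map; case: (c == b).
Qed.

Lemma size_letter_pos (b : bool) (w : seq bool) : size (letter_pos b w) = count_mem b w.
Proof.
elim: w => [|c w IH] //; rewrite letter_pos_cons /=.
by case: (c == b); rewrite /= size_map IH.
Qed.

Lemma pos_ltE (b : bool) (w : seq bool) i t : i < count_mem b w ->
  (pos b w i < t) = (i < count_mem b (take t w)).
Proof.
elim: w i t => [|c w IH] i [|t] //=; rewrite letter_pos_cons.
case: (c == b) => /= Hi; last by rewrite (nth_map 0) ?size_letter_pos // ltnS IH.
case: i Hi => [|i] //= Hi.
by rewrite (nth_map 0) ?size_letter_pos // ltnS IH.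
Qed.

Lemma nth_pos (b : bool) (w : seq bool) i : i < count_mem b w -> nth false w (pos b w i) = b.
Proof.
elim: w i => [|c w IH] i //=; rewrite letter_pos_cons.
case: eqP => [->|_] /= Hi; last by rewrite (nth_map 0) ?size_letter_pos //= IH.
by case: i Hi => [|i] //= Hi; rewrite (nth_map 0) ?size_letter_pos //= IH.
Qed.

Lemma pos_neq (w : seq bool) i j : i < count_mem false w -> j < count_mem true w ->
  pos false w i != pos true w j.
Proof.
by move=> Hi Hj; apply/eqP=> E; move: (nth_pos Hi); rewrite E nth_pos.
Qed.

Lemma ballot_pos (w : seq bool) n :
  count_mem false w = n -> count_mem true w = n ->
  (forall t, count_mem true (take t w) <= count_mem false (take t w)) <->
  (forall i, i < n -> pos false w i < pos true w i).
Proof.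
move=> Hf Ht; split=> [ballot i Hi | pos_lt t].
  have Hi0 : i < count_mem false w by rewrite Hf.
  have Hi1 : i < count_mem true w by rewrite Ht.
  rewrite ltn_neqAle pos_neq //= -ltnS pos_ltE //.
  by apply: leq_trans (ballot _); rewrite -pos_ltE.
case Ec: (count_mem true (take t w)) => [|c] //.
have Hc : c < n by rewrite -Ht -Ec count_take_le.
rewrite -pos_ltE ?Hf //; apply: ltn_trans (pos_lt _ Hc) _.
by rewrite pos_ltE ?Ht ?Ec.
Qed.

Lemma is_dyck_size n (w : seq bool) : is_dyck n w -> size w = n.*2.
Proof. by case/and4P=> /eqP. Qed.

Lemma is_dyck_count n (w : seq bool) b : is_dyck n w -> count_mem b w = n.
Proof. by case/and4P=> _ /eqP Hf /eqP Ht; case: b. Qed.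

Lemma is_dyck_ballot (w : seq bool) n : size w = n.*2 ->
  count_mem false w = n -> count_mem true w = n ->
  is_dyck n w <-> (forall t, count_mem true (take t w) <= count_mem false (take t w)).
Proof.
move=> Hs Hf Ht; rewrite /is_dyck Hs Hf Ht !eqxx !andTb.
split=> [ballot t | ballot]; last by apply/allP=> t _.
have [Htn|Htn] := leqP t n.*2; first by apply: (allP ballot); rewrite mem_iota ltnS.
by rewrite take_oversize ?Hs ?Hf ?Ht // ltnW.
Qed.

Lemma is_dyck_pos (w : seq bool) n : size w = n.*2 ->
  count_mem false w = n -> count_mem true w = n ->
  is_dyck n w <-> (forall i, i < n -> pos false w i < pos true w i).
Proof. by move=> Hs Hf Ht; rewrite -ballot_pos // is_dyck_ballot. Qed.

Fixpoint adjacency (b : bool) (w : seq bool) : seq bool :=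
  if w is c :: w' then
    if c == b then (head (~~ b) w' == b) :: adjacency b w' else adjacency b w'
  else [::].

Lemma size_adjacency (b : bool) (w : seq bool) : size (adjacency b w) = count_mem b w.
Proof. by elim: w => [|c w IH] //=; case: (c == b); rewrite /= IH. Qed.

Lemma last_adjacency (b : bool) (w : seq bool) : last false (adjacency b w) = false.
Proof.
elim: w => [|c w IH] //=; case: ifP => // _.
by case: w IH => [|c' w] /= IH; [case: b | case: (c' == b) IH; case: adjacency].
Qed.

Lemma adjacency_rcons (b : bool) (w : seq bool) : 0 < count_mem b w ->
  adjacency b w = rcons (take (count_mem b w).-1 (adjacency b w)) false.
Proof.
rewrite -size_adjacency; have := last_adjacency b w.
case/lastP: (adjacency b w) => // s x; rewrite last_rcons size_rcons -cats1 => -> _.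
by rewrite take_size_cat // cats1.
Qed.

Lemma pos_succE (b : bool) (w : seq bool) i : i.+1 < count_mem b w ->
  (pos b w i.+1 == (pos b w i).+1) = nth false (adjacency b w) i.
Proof.
elim: w i => [|c w IH] i //=; rewrite letter_pos_cons.
case: (c == b) => /= Hi; last first.
  by rewrite !(nth_map 0) ?size_letter_pos ?eqSS ?IH //; slia.
case: i Hi => [|i] Hi /=; last first.
  by rewrite !(nth_map 0) ?size_letter_pos ?eqSS ?IH //; slia.
rewrite (nth_map 0) ?size_letter_pos /=; last by slia.
case: w {IH} Hi => [|d w] //=; rewrite letter_pos_cons.
case: (d == b) => /= Hi; first by rewrite eqxx.
by rewrite (nth_map 0) ?size_letter_pos //; case: b Hi => /=.
Qed.

(* [count_mem false (take i (adjacency false w))] is the index of the run of zeros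
   containing the i-th zero, and runs of zeros and ones alternate. *)
Lemma pos_lt_runs (w : seq bool) i j :
  i < count_mem false w -> j < count_mem true w ->
  (pos false w i < pos true w j) =
  (count_mem false (take i (adjacency false w)) <
   count_mem false (take j (adjacency true w)) + ~~ head true w).
Proof.
elim: w i j => [|c w IH] i j //=; rewrite !letter_pos_cons.
case: c => /= Hi Hj.
  rewrite (nth_map 0) ?size_letter_pos; last by slia.
  case: j Hj => [|j] Hj /=; first by rewrite ltn0.
  rewrite (nth_map 0) ?size_letter_pos ?ltnS ?IH; try slia.
  by case: w {IH} Hi Hj => [|[] w] //= *; congr (_ < _); lia.
rewrite [X in _ < X](nth_map 0) ?size_letter_pos; last by slia.
case: i Hi => [|i] Hi /=; first by rewrite addn1.
by rewrite (nth_map 0) ?size_letter_pos ?ltnS ?IH; slia.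
Qed.

Lemma count_runs (w : seq bool) :
  count_mem false (adjacency false w) + head false w =
  count_mem false (adjacency true w) + ~~ last true w.
Proof.
elim: w => [|c w IH] //=.
by case: w IH => [|d w] /=; case: c => //; case: d => /=; lia.
Qed.

Lemma is_dyck_runs n (w : seq bool) : 0 < n -> size w = n.*2 ->
  count_mem false w = n -> count_mem true w = n ->
  is_dyck n w <-> head true w = false /\
    (forall i, i < n -> count_mem false (take i (adjacency false w)) <=
                        count_mem false (take i (adjacency true w))).
Proof.
move=> n_gt0 Hs Hf Ht; rewrite is_dyck_pos //.
have runsE i : i < n -> (pos false w i < pos true w i) =
    (count_mem false (take i (adjacency false w)) <
     count_mem false (take i (adjacency true w)) + ~~ head true w).
  by move=> Hi; rewrite pos_lt_runs ?Hf ?Ht.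
split=> [pos_lt | [Hh ballot] i Hi]; last by rewrite runsE // Hh addn1 ltnS ballot.
have Hh : head true w = false.
  by move: (pos_lt 0 n_gt0); rewrite runsE // !take0; case: head.
by split=> // i Hi; move: (pos_lt i Hi); rewrite runsE // Hh addn1 ltnS.
Qed.

(* [zero_next] says whether the next letter is a zero; the recursion alternates
   between [u] and [v], so it is bounded by [fuel] instead of being structural. *)
Fixpoint decode (fuel : nat) (zero_next : bool) (u v : seq bool) : seq bool :=
  if fuel is fuel'.+1 then
    if zero_next then
      if u is b :: u' then false :: decode fuel' b u' v else [::]
    else
      if v is b :: v' then true :: decode fuel' (~~ b) u v' else [::]
  else [::].

Lemma decode_adjacency (w : seq bool) fuel : size w <= fuel ->
  decode fuel (~~ head true w) (adjacency false w) (adjacency true w) = w.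
Proof.
elim: w fuel => [|c w IH] [|fuel] //=; rewrite ltnS => /IH {}IH.
case: c; last by rewrite /= eqbF_neg IH.
by case: w IH => [|d w] IH; [case: fuel {IH} | move: IH; rewrite /= eqb_id => ->].
Qed.

Lemma adjacency_decode fuel z (u v : seq bool) :
  size u + size v <= fuel -> count_mem false v = count_mem false u + ~~ z ->
  last false u = false -> last false v = false ->
  [/\ adjacency false (decode fuel z u v) = u,
      adjacency true (decode fuel z u v) = v,
      size (decode fuel z u v) = size u + size v &
      ohead (decode fuel z u v) = if z && nilp u then None else Some (~~ z)].
Proof.
elim: fuel z u v => [|fuel IH] z u v.
  by case: u v => [|//] [|//] _; case: z.
case: z => /= Hs Hc Hu Hv.
  case: u Hs Hc Hu => [|b u] /= Hs Hc Hu; first by rewrite (last_false_nil Hv).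
  have Hu' : last false u = false by case: u Hu {Hs Hc}.
  have [] := IH b u v; rewrite ?Hu' //; try slia.
  move: (decode fuel b u v) => rest -> -> -> Ho; split=> //; congr (_ :: _).
  case: b Hu Ho {Hc Hs} => [Hu|_]; last by case: rest => // ? ? [->].
  by case: u Hu {Hu'} => // ? ? _; case: rest => // ? ? [->].
case: v Hs Hc Hv => [|b v] /= Hs Hc Hv; first by slia.
have Hv' : last false v = false by case: v Hv {Hs Hc}.
have [] := IH (~~ b) u v; rewrite ?Hv' //; try slia.
move: (decode fuel (~~ b) u v) => rest -> -> -> Ho; split=> //; last by slia.
congr (_ :: _); case: rest Ho => [|c r]; case: b {Hc Hs Hv}; case: (nilp u) => //= -[->] //.
Qed.

Definition pair_step (x : bool * bool) : option (option bool) :=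
  match x with
  | (true, true) => None
  | (true, false) => Some (Some true)
  | (false, true) => Some (Some false)
  | (false, false) => Some None
  end.

Definition step_pair (o : option bool) : bool * bool :=
  if o is Some b then (b, ~~ b) else (false, false).

Lemma step_pairK : pcancel step_pair pair_step.
Proof. by case=> [[]|]. Qed.

Definition pairs_path (p : seq (bool * bool)) : seq (option bool) := pmap pair_step p.
Arguments pairs_path : simpl never.

Lemma pairs_path_step o p : pairs_path (step_pair o :: p) = o :: pairs_path p.
Proof. by rewrite /pairs_path /= step_pairK. Qed.

Lemma motzkin_from_pair h a b p :
  motzkin_from h (pairs_path ((a, b) :: p)) =
  ((a == false) <= h + (b == false)) &&
  motzkin_from (h + (b == false) - (a == false)) (pairs_path p).
Proof. by case: a b h => [] [] [|h] //=; rewrite ?addn0 ?addn1 ?subn1. Qed.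

Lemma flat0_from_pair h a b p : (a == false) <= h + (b == false) ->
  flat0_from h (pairs_path ((a, b) :: p)) =
  [&& ~~ a, ~~ b & h == 0] + flat0_from (h + (b == false) - (a == false)) (pairs_path p).
Proof. by case: a b h => [] [] [|h] //=; rewrite ?addn0 ?addn1 ?subn1. Qed.

Lemma ballot_cons h a b (u v : seq bool) :
  (forall i, i <= size (a :: u) ->
     count_mem false (take i (a :: u)) <= h + count_mem false (take i (b :: v))) <->
  (a == false) <= h + (b == false) /\
  (forall i, i <= size u -> count_mem false (take i u) <=
     (h + (b == false) - (a == false)) + count_mem false (take i v)).
Proof.
split=> [ballot | [Hab ballot] [|i] Hi //=].
  split=> [|i Hi]; first by move: (ballot 1 isT); rewrite /= !take0; slia.
  by move: (ballot i.+1 Hi) (ballot 1 isT); rewrite /= !take0; slia.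
by move: (ballot i Hi); slia.
Qed.

Lemma motzkin_pairsP h (u v : seq bool) : size u = size v ->
  motzkin_from h (pairs_path (zip u v)) <->
  (forall i, i <= size u ->
     count_mem false (take i u) <= h + count_mem false (take i v)) /\
  count_mem false u = h + count_mem false v.
Proof.
elim: u h v => [|a u IH] h [|b v] //= => [_|[Hs]].
  by split=> [/eqP ->|[_ /eqP]] //; rewrite eq_sym addn0.
rewrite motzkin_from_pair; case: leqP => Hab /=; last first.
  by split=> // -[/ballot_cons[]]; rewrite leqNgt Hab.
rewrite IH //; split=> [[ballot Htot]|[/ballot_cons[_ ballot] Htot]].
  by split; [apply/ballot_cons | slia].
by split=> //; slia.
Qed.

Lemma flat0_pairs h (u v : seq bool) : size u = size v ->
  (forall i, i <= size u ->
     count_mem false (take i u) <= h + count_mem false (take i v)) ->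
  flat0_from h (pairs_path (zip u v)) =
  count (fun j => [&& ~~ nth true u j, ~~ nth true v j &
                      h + count_mem false (take j v) == count_mem false (take j u)])
        (iota 0 (size u)).
Proof.
elim: u h v => [|a u IH] h [|b v] //= [Hs] /ballot_cons[Hab ballot].
rewrite flat0_from_pair // IH // (iotaDl 1 0) count_map addn0.
congr (_ + _); apply: eq_count => j /=.
by rewrite add0n; congr [&& _, _ & _]; apply/eqP/eqP; slia.
Qed.

Lemma blocks_nseq a l c : blocks (nseq a true ++ l) c = blocks l (c + a).
Proof. by elim: a c => [|a IH] c /=; rewrite ?addn0 // IH addSnnS. Qed.

Lemma size_blocks l c : size (blocks l c) = (count negb l).+1.
Proof. by elim: l c => [|[] l IH] c //=; rewrite IH. Qed.

Lemma blocks_headP l c : exists x X, blocks l c = x :: X /\ c <= x.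
Proof.
elim: l c => [|[] l IH] c /=; [by exists c, [::] | | by exists c, (blocks l 1)].
by have [x [X [-> /ltnW]]] := IH c.+1; exists x, X.
Qed.

Definition is_link (x : bool * bool) : bool := x == (true, true).

Lemma pairs_path_links k p : pairs_path (nseq k (true, true) ++ p) = pairs_path p.
Proof. by elim: k. Qed.

(* Inverse of [blocks]: [c] is the size already reached by the first block. *)
Fixpoint fill_links (c : nat) (X : seq nat) (m : seq (option bool)) :
    seq (bool * bool) :=
  if X is x :: X' then
    nseq (x - c) (true, true) ++
    if X' is [::] then [::] else step_pair (head None m) :: fill_links 1 X' (behead m)
  else [::].

Lemma fill_links_blocks p c : 0 < c ->
  fill_links c (blocks (map is_link p) c) (pairs_path p) = p.
Proof.
elim: p c => [|y p IH] c c_gt0 /=; first by rewrite subnn.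
rewrite {1}/is_link; case: eqP => [->|/eqP y_nlink] /=.
  have [k [K [E Hk]]] := blocks_headP (map is_link p) c.+1.
  by move: (IH c.+1 isT); rewrite E /= -(subnSK Hk) => E'; rewrite -[in RHS]E'.
have [k [K [E _]]] := blocks_headP (map is_link p) 1.
move: (IH 1 isT); rewrite E subnn /= => E'; rewrite -[in RHS]E'.
by case: y y_nlink => [[] []].
Qed.

Lemma fill_linksP c x X m : c <= x -> all (leq 1) X -> size m = size X ->
  [/\ blocks (map is_link (fill_links c (x :: X) m)) c = x :: X,
      pairs_path (fill_links c (x :: X) m) = m &
      size (fill_links c (x :: X) m) = x + sumn X - c].
Proof.
elim: X c x m => [|y Y IH] c x [|o m] //= Hcx => [_ _|/andP[Hy HY] [Hm]].
  rewrite !cats0 size_nseq addn0 map_nseq -[nseq _ true]cats0 blocks_nseq subnKC //.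
  by split=> //; elim: (x - c).
have [E1 E2 E3] := IH 1 y m Hy HY Hm.
rewrite map_cat map_nseq blocks_nseq pairs_path_links size_cat size_nseq /=.
rewrite pairs_path_step E2.
have -> : is_link (step_pair o) = false by case: o => [[]|].
by rewrite E1 E3 subnKC //; split=> //; lia.
Qed.

Lemma card_tuple_le (T1 T2 : finType) n1 n2 (P1 : pred (seq T1)) (P2 : pred (seq T2))
    (f : seq T1 -> seq T2) (g : seq T2 -> seq T1) :
    (forall s, size s = n1 -> P1 s -> [/\ size (f s) = n2, P2 (f s) & g (f s) = s]) ->
  #|[set s : n1.-tuple T1 | P1 s]| <= #|[set t : n2.-tuple T2 | P2 t]|.
Proof.
move=> fP; rewrite !cardE -(size_map (f \o val)) -(size_map val (enum _)).
apply: uniq_leq_size.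
  rewrite map_inj_in_uniq ?enum_uniq // => s s'; rewrite !mem_enum !inE => Ps Ps' /= E.
  have [_ _ gfs] := fP s (size_tuple s) Ps; have [_ _ gfs'] := fP s' (size_tuple s') Ps'.
  by apply: val_inj; rewrite /= -gfs -gfs' E.
move=> y /mapP[s]; rewrite mem_enum inE => Ps ->.
have [/eqP szf Pf _] := fP s (size_tuple s) Ps.
by apply/mapP; exists (Tuple szf); rewrite ?mem_enum ?inE.
Qed.

Lemma card_tuple_bij (T1 T2 : finType) n1 n2 (P1 : pred (seq T1)) (P2 : pred (seq T2))
    (f : seq T1 -> seq T2) (g : seq T2 -> seq T1) :
    (forall s, size s = n1 -> P1 s -> [/\ size (f s) = n2, P2 (f s) & g (f s) = s]) ->
    (forall t, size t = n2 -> P2 t -> [/\ size (g t) = n1, P1 (g t) & f (g t) = t]) ->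
  #|[set s : n1.-tuple T1 | P1 s]| = #|[set t : n2.-tuple T2 | P2 t]|.
Proof.
by move=> fP gP; apply/eqP; rewrite eqn_leq (card_tuple_le fP) (card_tuple_le gP).
Qed.

Lemma size_pairs_path p : size (pairs_path p) = count (predC is_link) p.
Proof. by rewrite size_pmap; apply: eq_count => -[[] []]. Qed.

Lemma card_pairs_motzkin N X (Q : pred (seq (option bool))) :
  all (leq 1) X -> sumn X = N.+1 ->
  #|[set p : N.-tuple (bool * bool) |
     Q (pairs_path p) && (blocks (map is_link p) 1 == X)]| =
  #|[set m : ((size X).-1).-tuple (option bool) | Q m]|.
Proof.
case: X => [|x X] //= /andP[Hx HX] Hsum.
apply: (@card_tuple_bij _ _ _ _
  (fun p => Q (pairs_path p) && (blocks (map is_link p) 1 == x :: X)) Q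
  pairs_path (fill_links 1 (x :: X))).
  move=> p _ /andP[HQ /eqP Hb]; split=> //; last by rewrite -Hb fill_links_blocks.
  by move/(congr1 size): Hb; rewrite size_blocks count_map size_pairs_path => -[].
move=> m Hm HQ; have [-> -> ->] := fill_linksP Hx HX Hm.
by split=> //; rewrite ?HQ ?eqxx //; lia.
Qed.

Definition dyck_pairs n (w : seq bool) : seq (bool * bool) :=
  zip (take n.-1 (adjacency false w)) (take n.-1 (adjacency true w)).

Definition pairs_dyck n (p : seq (bool * bool)) : seq bool :=
  decode n.*2 true (rcons (unzip1 p) false) (rcons (unzip2 p) false).

Section DyckWord.
Variables (n : nat) (w : seq bool).
Hypotheses (n_gt0 : 0 < n) (w_dyck : is_dyck n w).

Local Notation u := (adjacency false w).
Local Notation v := (adjacency true w).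

Let size_w := is_dyck_size w_dyck.
Let count_false := is_dyck_count false w_dyck.
Let count_true := is_dyck_count true w_dyck.

Lemma balanced_prefix_pos j : j.+1 < n ->
  (count_mem false (take j.+1.*2 w) == j.+1) && (count_mem true (take j.+1.*2 w) == j.+1)
  = (pos true w j < pos false w j.+1).
Proof.
move=> Hj; have Hj0 : j.+1 < count_mem false w by rewrite count_false.
have Hj1 : j < count_mem true w by rewrite count_true ltnW.
apply/andP/idP=> [[/eqP H0 /eqP H1] | lt_pos].
  have := pos_ltE j.+1.*2 Hj1; rewrite H1 ltnSn => /leq_trans; apply.
  by rewrite leqNgt pos_ltE // H0 ltnn.
set t := pos false w j.+1.
have t_lt : t < size w by rewrite pos_ltE // take_size.
have H1 : j < count_mem true (take t w) by rewrite -pos_ltE.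
have H0 : count_mem false (take t w) <= j.+1 by rewrite leqNgt -pos_ltE ?ltnn.
have := (is_dyck_ballot size_w count_false count_true).1 w_dyck t.
have := count_false_true (take t w); rewrite size_takel => [Et ballot|]; last exact: ltnW.
have -> : j.+1.*2 = t by lia.
by split; apply/eqP; lia.
Qed.

Let dyck_runs := (is_dyck_runs n_gt0 size_w count_false count_true).1 w_dyck.

Lemma pos_lt_succ_runs j : j.+1 < n ->
  (pos true w j < pos false w j.+1) =
  [&& ~~ nth true u j, ~~ nth true v j &
      count_mem false (take j v) == count_mem false (take j u)].
Proof.
move=> Hj; have [hd ballot] := dyck_runs.
have Hj0 : j.+1 < count_mem false w by rewrite count_false.
have Hj1 : j < count_mem true w by rewrite count_true ltnW.
rewrite ltn_neqAle leqNgt eq_sym pos_neq //= pos_lt_runs // hd.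
move: (ballot j (ltnW Hj)) (ballot j.+1 Hj).
rewrite !(count_take_nth true) ?size_adjacency ?count_false ?count_true ?(ltnW Hj) //.
by case: (nth true u j) (nth true v j) => [] [] /=; lia.
Qed.

Lemma hits_runs : hits n w = 2 + count (fun j =>
    [&& ~~ nth true u j, ~~ nth true v j &
        count_mem false (take j v) == count_mem false (take j u)]) (iota 0 n.-1).
Proof.
rewrite /hits; have -> : iota 0 n.+1 = 0 :: rcons (iota 1 n.-1) n.
  have En : n = n.-1 + 1 by rewrite addn1 prednK.
  by rewrite -cats1 /= {1}En iotaD add1n prednK.
rewrite /= -cats1 count_cat (iotaDl 1 0) count_map /= take0 -size_w take_size.
rewrite count_false count_true !eqxx /= addn0 add1n addnC; congr (_.+1.+1).
apply: eq_in_count => j; rewrite mem_iota => /andP[_ Hj] /=.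
by rewrite add1n balanced_prefix_pos ?pos_lt_succ_runs //; lia.
Qed.

Let size_take_adjacency b : size (take n.-1 (adjacency b w)) = n.-1.
Proof.
by rewrite size_takel // size_adjacency; case: b; rewrite ?count_true ?count_false leq_pred.
Qed.

Lemma size_dyck_pairs : size (dyck_pairs n w) = n.-1.
Proof. by rewrite size_zip !size_take_adjacency minnn. Qed.

Lemma dyck_pairs_ballot i : i <= n.-1 ->
  count_mem false (take i (take n.-1 u)) <= 0 + count_mem false (take i (take n.-1 v)).
Proof. by move=> Hi; rewrite !take_takel //; apply: dyck_runs.2; lia. Qed.

Lemma dyck_pairs_motzkin : is_motzkin (pairs_path (dyck_pairs n w)).
Proof.
apply/motzkin_pairsP; rewrite ?size_take_adjacency //; split; first exact: dyck_pairs_ballot.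
have := dyck_pairs_ballot (leqnn _); rewrite !take_takel //.
have := count_runs w; rewrite {1}(adjacency_rcons (b := false)) ?count_false //.
rewrite {1}(adjacency_rcons (b := true)) ?count_true // -!cats1 !count_cat /=.
have -> : head false w = false by move: dyck_runs.1; case: (w) => [|[]].
by lia.
Qed.

Lemma hits_pairs : hits n w = (flat_zero (pairs_path (dyck_pairs n w))).+2.
Proof.
rewrite hits_runs /flat_zero flat0_pairs ?size_take_adjacency //; last exact: dyck_pairs_ballot.
rewrite add2n; congr (_.+2); apply: eq_in_count => j; rewrite mem_iota => /andP[_ Hj].
by rewrite !nth_take ?take_takel ?(ltnW Hj).
Qed.

Lemma dyck_pairsK : pairs_dyck n (dyck_pairs n w) = w.
Proof.
rewrite /pairs_dyck /dyck_pairs unzip1_zip ?unzip2_zip ?size_take_adjacency //.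
rewrite -count_false -(adjacency_rcons (b := false)) ?count_false //.
rewrite -count_true -(adjacency_rcons (b := true)) ?count_true //.
have [hd _] := dyck_runs.
by have := decode_adjacency (leqnn (size w)); rewrite hd size_w.
Qed.

End DyckWord.

Lemma linked_adjacency (w : seq bool) k :
  k.+1 < count_mem false w -> k.+1 < count_mem true w ->
  linked w k.+1 = is_link (nth false (adjacency false w) k, nth false (adjacency true w) k).
Proof.
move=> H0 H1; rewrite /linked /occ /= (pos_succE H0) (pos_succE H1).
by rewrite /is_link xpair_eqE !eqb_id.
Qed.

Lemma free_composition_pairs n (w : seq bool) : 0 < n ->
  count_mem false w = n -> count_mem true w = n ->
  free_composition n w = blocks (map is_link (dyck_pairs n w)) 1.
Proof.
case: n => // n _ Hf Ht; rewrite /free_composition /dyck_pairs /=; congr (blocks _ 1).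
have size_take b : size (take n (adjacency b w)) = n.
  by rewrite size_takel // size_adjacency; case: b; rewrite ?Hf ?Ht.
apply: (@eq_from_nth _ false); first by rewrite !size_map size_iota size_zip !size_take minnn.
rewrite size_map size_iota => k Hk.
rewrite (nth_map 0) ?size_iota // nth_iota // add1n (nth_map (false, false)); last first.
  by rewrite size_zip !size_take minnn.
by rewrite nth_zip ?size_take // !nth_take // linked_adjacency ?Hf ?Ht.
Qed.

Lemma pairs_dyckP n p : 0 < n -> size p = n.-1 -> is_motzkin (pairs_path p) ->
  [/\ size (pairs_dyck n p) = n.*2, is_dyck n (pairs_dyck n p) &
      dyck_pairs n (pairs_dyck n p) = p].
Proof.
move=> n_gt0 size_p; rewrite -(zip_unzip p) /pairs_dyck unzip1_zip ?unzip2_zip ?size_map //.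
have size_u : size (unzip1 p) = n.-1 by rewrite size_map.
have size_v : size (unzip2 p) = n.-1 by rewrite size_map.
move: (unzip1 p) (unzip2 p) size_u size_v => u v size_u size_v.
case/(motzkin_pairsP _ (etrans size_u (esym size_v))) => ballot total.
have take_rcons (s : seq bool) i : i <= size s -> take i (rcons s false) = take i s.
  by move=> Hi; rewrite -cats1 takel_cat.
have [] := @adjacency_decode n.*2 true (rcons u false) (rcons v false).
- by rewrite !size_rcons size_u size_v; lia.
- by rewrite -!cats1 !count_cat total add0n addn0.
- by rewrite last_rcons.
- by rewrite last_rcons.
move: (decode _ _ _ _) => w Hu Hv size_w head_w.
have count_w b : count_mem b w = n.
  by rewrite -size_adjacency; case: b; rewrite ?Hu ?Hv size_rcons ?size_u ?size_v prednK.
have Hw : size w = n.*2 by rewrite size_w !size_rcons size_u size_v prednK // addnn.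
split=> //; first last.
  by rewrite /dyck_pairs Hu Hv -!cats1 -{1}size_u -size_v !take_size_cat.
apply/(is_dyck_runs n_gt0 Hw (count_w false) (count_w true)); split.
  by move: head_w; rewrite /nilp size_rcons; case: (w) => [|[]].
move=> i; rewrite -[in i < n](prednK n_gt0) ltnS => Hi.
by rewrite Hu Hv !take_rcons ?size_u ?size_v //; apply: ballot; rewrite size_u.
Qed.

Lemma card_dyck_pairs n (R : seq nat -> nat -> bool) : 0 < n ->
  #|[set w : (n.*2).-tuple bool | is_dyck n w && R (free_composition n w) (hits n w)]| =
  #|[set p : (n.-1).-tuple (bool * bool) | is_motzkin (pairs_path p) &&
       R (blocks (map is_link p) 1) (flat_zero (pairs_path p)).+2]|.
Proof.
move=> n_gt0; apply: (@card_tuple_bij _ _ _ _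
  (fun w => is_dyck n w && R (free_composition n w) (hits n w))
  (fun p => is_motzkin (pairs_path p) &&
            R (blocks (map is_link p) 1) (flat_zero (pairs_path p)).+2)
  (dyck_pairs n) (pairs_dyck n)).
  move=> w _ /andP[w_dyck HR]; rewrite size_dyck_pairs ?dyck_pairs_motzkin ?dyck_pairsK //.
  by rewrite -hits_pairs -?free_composition_pairs ?(is_dyck_count _ w_dyck).
move=> p size_p /andP[p_mot HR]; have [size_w w_dyck Ep] := pairs_dyckP n_gt0 size_p p_mot.
by rewrite size_w w_dyck free_composition_pairs ?hits_pairs ?Ep ?(is_dyck_count _ w_dyck).
Qed.

Theorem lemma4p5 (n : nat) (X : seq nat) (l : nat) :
  0 < n -> is_composition n X -> 2 <= l ->
  #|[set w : (n.*2).-tuple bool |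
      [&& is_dyck n w, free_composition n w == X & hits n w == l]]|
  = #|[set m : ((size X).-1).-tuple (option bool) |
      is_motzkin m && (flat_zero m == l - 2)]|.
Proof.
move=> n_gt0 /andP[X_pos /eqP X_sum] l_ge2.
rewrite (card_dyck_pairs (fun F h => (F == X) && (h == l)) n_gt0).
rewrite -(card_pairs_motzkin (N := n.-1) (fun m => is_motzkin m && (flat_zero m == l - 2)))
  ?prednK //.
apply: eq_card => p; rewrite !inE andbA andbAC.
by congr (_ && _); apply/eqP/eqP; lia.
Qed.
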